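(* Let $n>0$ be a natural number and let $A=pqs(n,cs',us',ds')$ be an atom (possibly non-ground) such that $cs'$ is a list of length $n$ and every ground instance of $A$ belongs to $S$. Then $cs'$ is a list of distinct members whose members are exactly $1,\dots,n$, and it is a solution of the $n$ queens problem: placing, for each $j\in\{1,\dots,n\}$, the queen of row $j$ in column $k$ where $j$ is the $k$-th member of $cs'$, no two queens share a row, a column, or a diagonal (i.e. for distinct $j,j'$ in columns $k,k'$ one has $k\ne k'$, $k+j\ne k'+j'$ and $k-j\ne k'-j'$). In particular, since NQUEENS is correct w.r.t. $S$, this holds for every answer of NQUEENS that is an instance of a query $pqs(n,q_0,X,Y)$ with $q_0$ a list of $n$ distinct variables.
   Context: Terms are built over a fixed alphabet containing the constant $0$, the unary symbol $s$, the list constant $[\,]$ and the binary list constructor $[\cdot|\cdot]$; $\mathcal{HU}$ is the set of ground terms and $\mathcal{HB}$ the set of ground atoms. A natural number $i$ is identified with the term $s^i(0)$. Prolog list notation is used: $[e_1,\dots,e_n|e]$ stands for $e$ when $n=0$, and a list of length $n$ is a term $[e_1,\dots,e_n]$. A term $e$ is the $k$-th member of a term $t$ ($k\ge 1$) if $t=[e_1,\dots,e_{k-1},e|e']$ for some terms $e_1,\dots,e_{k-1},e'$; $e$ is a member of $t$ if it is its $k$-th member for some $k$. A list of distinct members is a list whose elements are pairwise distinct. The program NQUEENS consists of the definite clauses (capitalized names are variables): (C1) $pqs(0,X_1,X_2,X_3)$. (C2) $pqs(s(I),Cs,Us,[X|Ds]) \gets pqs(I,Cs,[Y|Us],Ds),\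 pq(s(I),Cs,Us,Ds)$. (C3) $pq(I,[I|X_1],[I|X_2],[I|X_3])$. (C4) $pq(I,[X_1|Cs],[X_2|Us],[X_3|Ds]) \gets pq(I,Cs,Us,Ds)$. An answer of a program $P$ is a query $Q$ with $P\models Q$. A program $P$ is correct w.r.t. a set $S\subseteq\mathcal{HB}$ if its least Herbrand model is contained in $S$. If a number $j$ is the $k$-th member of a list $cs$, the up-diagonal number of $j$ w.r.t. $i$ in $cs$ is $k+j-i$ and the down-diagonal number is $k+i-j$. A triple $(cs,us,ds)$ of terms is correct up to $m$ w.r.t. $i$ when $0\le m\le i$ and: $cs$ is a list of distinct members and each $j\in\{1,\dots,m\}$ is a member of $cs$; the up-diagonal numbers of $1,\dots,m$ in $cs$ are pairwise distinct, and likewise the down-diagonal numbers; and for each $j\in\{1,\dots,m\}$, if the up-diagonal (resp. down-diagonal) number of $j$ w.r.t. $i$ in $cs$ is $l>0$, then the $l$-th member of $us$ (resp. $ds$) is $j$. Specifications: $S_{pq}=\{pq(i,[c_1,\dots,c_k,i|c],[u_1,\dots,u_k,i|u],[d_1,\dots,d_k,i|d])\in\mathcal{HB}\mid k\ge0\}$; $S_{pqs}=\{pqs(0,cs,us,ds)\mid cs,us,ds\in\mathcal{HU}\}\cup\{pqs(i,cs,us,[t|ds])\in\mathcal{HB}\mid i>0$, $1,\dots,i$ are members of $cs$, and if $cs$ is a list of distinct members then $(cs,us,ds)$ is correct up to $i$ w.r.t. $i\}$; $S=S_{pq}\cup S_{pqs}$. *)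

From Stdlib Require Import List Arith Lia ZArith.
Import ListNotations.

Inductive term : Type :=
  | Var  : nat -> term
  | Zero : term
  | Succ : term -> term
  | Nil  : term
  | Cons : term -> term -> term.

Fixpoint ground (t : term) : Prop :=
  match t with
  | Var _ => False
  | Zero | Nil => True
  | Succ u => ground u
  | Cons a b => ground a /\ ground b
  end.

Fixpoint subst (sigma : nat -> term) (t : term) : term :=
  match t with
  | Var v => sigma v
  | Zero => Zero
  | Succ u => Succ (subst sigma u)
  | Nil => Nil
  | Cons a b => Cons (subst sigma a) (subst sigma b)
  end.

Definition ground_subst (sigma : nat -> term) : Prop :=
  forall v, ground (sigma v).

Inductive atom : Type :=
  | Pqs : term -> term -> term -> term -> atom
  | Pq  : term -> term -> term -> term -> atom.

Definition ground_atom (A : atom) : Prop :=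
  match A with
  | Pqs a b c d | Pq a b c d => ground a /\ ground b /\ ground c /\ ground d
  end.

Definition subst_atom (sigma : nat -> term) (A : atom) : atom :=
  match A with
  | Pqs a b c d => Pqs (subst sigma a) (subst sigma b) (subst sigma c) (subst sigma d)
  | Pq a b c d => Pq (subst sigma a) (subst sigma b) (subst sigma c) (subst sigma d)
  end.

Definition instance_of (B A : atom) : Prop :=
  exists sigma, B = subst_atom sigma A.

Fixpoint num (i : nat) : term :=
  match i with
  | O => Zero
  | S j => Succ (num j)
  end.

(** Prolog list notation [e1,...,en|e]. *)
Fixpoint lst (es : list term) (tl : term) : term :=
  match es with
  | [] => tl
  | e :: es' => Cons e (lst es' tl)
  end.

Definition is_list_of_length (t : term) (n : nat) : Prop :=
  exists es, length es = n /\ t = lst es Nil.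

Definition kth_member (k : nat) (e t : term) : Prop :=
  1 <= k /\ exists es e', length es = k - 1 /\ t = lst (es ++ [e]) e'.

Definition member (e t : term) : Prop := exists k, kth_member k e t.

Definition distinct_list (t : term) : Prop :=
  (exists es, t = lst es Nil) /\
  (forall k k' e e', kth_member k e t -> kth_member k' e' t -> k <> k' -> e <> e').

Definition up_diag (k j i : nat) : Z := (Z.of_nat k + Z.of_nat j - Z.of_nat i)%Z.
Definition down_diag (k j i : nat) : Z := (Z.of_nat k + Z.of_nat i - Z.of_nat j)%Z.

Definition correct_up_to (cs us ds : term) (m i : nat) : Prop :=
  m <= i /\
  distinct_list cs /\
  (forall j, 1 <= j <= m -> member (num j) cs) /\
  (forall j j' k k', 1 <= j <= m -> 1 <= j' <= m -> j <> j' ->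
     kth_member k (num j) cs -> kth_member k' (num j') cs ->
     up_diag k j i <> up_diag k' j' i) /\
  (forall j j' k k', 1 <= j <= m -> 1 <= j' <= m -> j <> j' ->
     kth_member k (num j) cs -> kth_member k' (num j') cs ->
     down_diag k j i <> down_diag k' j' i) /\
  (forall j k, 1 <= j <= m -> kth_member k (num j) cs ->
     (0 < up_diag k j i)%Z -> kth_member (Z.to_nat (up_diag k j i)) (num j) us) /\
  (forall j k, 1 <= j <= m -> kth_member k (num j) cs ->
     (0 < down_diag k j i)%Z -> kth_member (Z.to_nat (down_diag k j i)) (num j) ds).

Definition in_S_pq (A : atom) : Prop :=
  ground_atom A /\
  match A with
  | Pq i cs us ds =>
      exists k, kth_member (S k) i cs /\ kth_member (S k) i us /\ kth_member (S k) i ds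
  | _ => False
  end.

Definition in_S_pqs (A : atom) : Prop :=
  ground_atom A /\
  match A with
  | Pqs a cs us dds =>
      a = Zero \/
      exists i t ds, 0 < i /\ a = num i /\ dds = Cons t ds /\
        (forall j, 1 <= j <= i -> member (num j) cs) /\
        (distinct_list cs -> correct_up_to cs us ds i i)
  | _ => False
  end.

Definition in_S (A : atom) : Prop := in_S_pq A \/ in_S_pqs A.

Record clause : Type := mkClause { head : atom ; body : list atom }.
Definition program := list clause.

Inductive least_herbrand_model (P : program) : atom -> Prop :=
  | lhm_step : forall c sigma, In c P -> ground_subst sigma ->
      (forall b, In b (body c) -> least_herbrand_model P (subst_atom sigma b)) ->
      least_herbrand_model P (subst_atom sigma (head c)).

Definition herbrand_model (P : program) (I : atom -> Prop) : Prop :=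
  forall c sigma, In c P -> ground_subst sigma ->
    (forall b, In b (body c) -> I (subst_atom sigma b)) ->
    I (subst_atom sigma (head c)).

(** Q is an answer of P: P |= Q (Q read universally closed), evaluated over
    Herbrand interpretations: every ground instance of Q is true in every
    Herbrand model of P. *)
Definition answer (P : program) (Q : atom) : Prop :=
  forall I, herbrand_model P I ->
    forall sigma, ground_subst sigma -> I (subst_atom sigma Q).

Definition correct_wrt (P : program) (Sp : atom -> Prop) : Prop :=
  forall A, least_herbrand_model P A -> Sp A.

Definition vX1 := Var 0. Definition vX2 := Var 1. Definition vX3 := Var 2.
Definition vI := Var 3. Definition vCs := Var 4. Definition vUs := Var 5.
Definition vX := Var 6. Definition vDs := Var 7. Definition vY := Var 8.

Definition NQUEENS : program :=
  [ mkClause (Pqs Zero vX1 vX2 vX3) [];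
    mkClause (Pqs (Succ vI) vCs vUs (Cons vX vDs))
               [Pqs vI vCs (Cons vY vUs) vDs; Pq (Succ vI) vCs vUs vDs];
    mkClause (Pq vI (Cons vI vX1) (Cons vI vX2) (Cons vI vX3)) [];
    mkClause (Pq vI (Cons vX1 vCs) (Cons vX2 vUs) (Cons vX3 vDs))
               [Pq vI vCs vUs vDs] ].

(** cs is a solution of the n queens problem: queen of row j is in the
    column k where j is the k-th member of cs. *)
Definition nqueens_solution (cs : term) (n : nat) : Prop :=
  forall j j' k k', 1 <= j <= n -> 1 <= j' <= n -> j <> j' ->
    kth_member k (num j) cs -> kth_member k' (num j') cs ->
    k <> k' /\ k + j <> k' + j' /\
    (Z.of_nat k - Z.of_nat j <> Z.of_nat k' - Z.of_nat j')%Z.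

Definition nqueens_conclusion (cs : term) (n : nat) : Prop :=
  distinct_list cs /\
  (forall e, member e cs <-> exists j, 1 <= j <= n /\ e = num j) /\
  nqueens_solution cs n.

From Stdlib Require Import List Lia ZArith FinFun.
Import ListNotations.

(* Instantiating the atom
   pqs(n, cs', us', ds') with the substitution sending every variable to [ ]
   yields a ground atom of S_pqs, so 1..n are members of the grounded cs'.
   Since cs' has length n, a pigeonhole argument shows that its grounded
   members are exactly the numerals 1..n, pairwise distinct; as [ ] is not a
   numeral, grounding did not change them, so cs' itself is this list.  The
   S_pqs clause then gives "correct up to n w.r.t. n", whose diagonal
   conditions are precisely the n-queens conditions.

   S is a Herbrand model of NQUEENS: the only
   non-trivial clause is C2, where the invariant "correct up to i w.r.t. i"
   is extended by the queen of row i+1, whose position in cs, us and ds is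
   given by the pq atom.  Shifting the reference row from i to i+1 lowers
   every old up-diagonal number by one and raises every down-diagonal number
   by one; C2 shifts the diagonal lists accordingly (the body's [Y|Us] loses
   its head, and the invariant now covers all of Ds rather than its tail).
   Hence every
   answer is true in S, and an instance of pqs(n, q0, X, Y) has a list of
   length n as second argument, so Part 1 applies. *)

Fixpoint nth_member (k : nat) (t : term) : option term :=
  match k, t with
  | S 0, Cons a _ => Some a
  | S k', Cons _ b => nth_member k' b
  | _, _ => None
  end.

Lemma kth_member_iff k e t : kth_member k e t <-> nth_member k t = Some e.
Proof.
  split.
  - intros [Hk [es [e' [Hl ->]]]].
    revert k Hk Hl; induction es as [|a es IH]; intros k Hk Hl; simpl in *.
    + destruct k as [|[|k]]; simpl in *; [lia|reflexivity|lia].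
    + destruct k as [|[|k]]; simpl in *; try lia.
      exact (IH (S k) ltac:(lia) ltac:(lia)).
  - revert t; induction k as [|k IH]; intros t H; [discriminate|].
    destruct k as [|k], t; simpl in H; try discriminate.
    + injection H as <-. split; [lia|]. now exists [], t2.
    + destruct (IH _ H) as [_ [es [e' [Hl Ht]]]].
      split; [lia|]. exists (t1 :: es), e'. simpl; split; [lia|now rewrite Ht].
Qed.

Lemma kth_member_fun k e e' t : kth_member k e t -> kth_member k e' t -> e = e'.
Proof. rewrite !kth_member_iff; congruence. Qed.

Lemma kth_member_pos k e t : kth_member k e t -> 1 <= k.
Proof. now intros [H _]. Qed.

Lemma kth_member_head a t : kth_member 1 a (Cons a t).
Proof. now rewrite kth_member_iff. Qed.

Lemma kth_member_cons k e a t :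
  1 <= k -> (kth_member (S k) e (Cons a t) <-> kth_member k e t).
Proof. intros Hk; rewrite !kth_member_iff; destruct k; [lia|reflexivity]. Qed.

Lemma kth_member_cell k e t : kth_member k e t -> exists a t', t = Cons a t'.
Proof.
  rewrite kth_member_iff; destruct k as [|[|k]], t; try discriminate; eauto.
Qed.

Lemma kth_member_lst k e es :
  kth_member (S k) e (lst es Nil) <-> nth_error es k = Some e.
Proof.
  rewrite kth_member_iff; revert k; induction es as [|a es IH]; intros k.
  - destruct k; simpl; split; discriminate.
  - destruct k; simpl; [reflexivity|]. rewrite <- IH. reflexivity.
Qed.

Lemma member_lst e es : member e (lst es Nil) <-> In e es.
Proof.
  split.
  - intros [[|k] Hk]; [apply kth_member_pos in Hk; lia|].
    apply kth_member_lst in Hk. eapply nth_error_In; eauto.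
  - intros H; apply In_nth_error in H as [k Hk].
    exists (S k); now apply kth_member_lst.
Qed.

Lemma distinct_position t k k' e :
  distinct_list t -> kth_member k e t -> kth_member k' e t -> k = k'.
Proof.
  intros [_ Hd] H1 H2; destruct (Nat.eq_dec k k') as [|Hne]; [assumption|].
  now destruct (Hd _ _ _ _ H1 H2 Hne).
Qed.

Lemma distinct_list_of_NoDup es : NoDup es -> distinct_list (lst es Nil).
Proof.
  intros Hnd; split; [eauto|].
  intros [|k] [|k'] e e' H1 H2 Hne Heq; subst e';
    try (apply kth_member_pos in H1 + apply kth_member_pos in H2; lia).
  apply kth_member_lst in H1, H2. apply Hne; f_equal.
  apply (proj1 (NoDup_nth_error es) Hnd); [apply nth_error_Some|]; congruence.
Qed.

Lemma num_inj j j' : num j = num j' -> j = j'.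
Proof. revert j'; induction j; intros []; simpl; intros H; inversion H; auto. Qed.

Lemma subst_num sigma j : subst sigma (num j) = num j.
Proof. induction j; simpl; congruence. Qed.

Lemma subst_lst sigma es t :
  subst sigma (lst es t) = lst (map (subst sigma) es) (subst sigma t).
Proof. induction es; simpl; congruence. Qed.

Definition nil_subst : nat -> term := fun _ => Nil.

Lemma nil_subst_ground : ground_subst nil_subst.
Proof. intros v; exact I. Qed.

(** Since [ ] is not a numeral, grounding by [nil_subst] creates no numeral. *)
Lemma nil_subst_num t j : subst nil_subst t = num j -> t = num j.
Proof.
  revert t; induction j; intros [] H; simpl in *; try discriminate; auto.
  injection H as H; f_equal; auto.
Qed.

Lemma nil_subst_numerals es :
  (forall e, In e (map (subst nil_subst) es) -> exists j, e = num j) ->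
  map (subst nil_subst) es = es.
Proof.
  intros Hnum; rewrite <- (map_id es) at 2; apply map_ext_in.
  intros e He; destruct (Hnum _ (in_map _ _ _ He)) as [j Hj].
  now rewrite (nil_subst_num _ _ Hj), subst_num.
Qed.

(** What S_pqs states about pqs(i, cs, us, [_|ds]). *)
Definition pqs_invariant (i : nat) (cs us ds : term) : Prop :=
  (forall j, 1 <= j <= i -> member (num j) cs) /\
  (distinct_list cs -> correct_up_to cs us ds i i).

Lemma correct_up_to_zero cs us ds i :
  distinct_list cs -> correct_up_to cs us ds 0 i.
Proof. intros Hd; split; [lia | split; [exact Hd | repeat split; intros; lia]]. Qed.

Lemma in_S_pqs_invariant a cs us t ds :
  in_S (Pqs a cs us (Cons t ds)) -> exists i, a = num i /\ pqs_invariant i cs us ds.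
Proof.
  intros [[_ []] | [_ [-> | [i [t' [ds' [_ [-> [Hdd Hinv]]]]]]]]].
  - exists 0; split; [reflexivity|]. split; [intros; lia|].
    apply correct_up_to_zero.
  - injection Hdd as _ <-. now exists i.
Qed.

(** For a positive numeral, the Zero alternative of S_pqs is excluded. *)
Lemma in_S_pqs_positive n cs us dds :
  0 < n -> in_S (Pqs (num n) cs us dds) -> exists ds, pqs_invariant n cs us ds.
Proof.
  intros Hn [[_ []] | [_ [Hz | [i [t [ds [_ [Hi [_ Hinv]]]]]]]]].
  - destruct n; [lia|discriminate].
  - apply num_inj in Hi; subst i; now exists ds.
Qed.

Lemma numerals_enumeration n es :
  length es = n -> (forall j, 1 <= j <= n -> In (num j) es) ->
  NoDup es /\ (forall e, In e es -> exists j, 1 <= j <= n /\ e = num j).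
Proof.
  intros Hlen Hin.
  set (L := map num (seq 1 n)).
  assert (HL : NoDup L).
  { apply Injective_map_NoDup; [intros a b; apply num_inj | apply seq_NoDup]. }
  assert (HLes : incl L es).
  { intros e He; apply in_map_iff in He as [j [<- Hj]].
    apply in_seq in Hj; apply Hin; lia. }
  assert (Hle : length es <= length L) by (unfold L; rewrite length_map, length_seq; lia).
  split; [exact (NoDup_incl_NoDup HL Hle HLes)|].
  intros e He; apply (NoDup_length_incl HL Hle HLes), in_map_iff in He as [j [<- Hj]].
  apply in_seq in Hj; exists j; split; [lia|reflexivity].
Qed.

Lemma solution_of_correct cs us ds n :
  correct_up_to cs us ds n n -> nqueens_solution cs n.
Proof.
  intros [_ [_ [_ [Hup [Hdown _]]]]] j j' k k' Hj Hj' Hne Hk Hk'.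
  split; [|split].
  - intros <-; apply Hne, num_inj; eapply kth_member_fun; eauto.
  - specialize (Hup _ _ _ _ Hj Hj' Hne Hk Hk'); unfold up_diag in Hup; lia.
  - specialize (Hdown _ _ _ _ Hj Hj' Hne Hk Hk'); unfold down_diag in Hdown; lia.
Qed.

Lemma spec_forces_solution n cs us ds :
  0 < n -> is_list_of_length cs n ->
  (forall sigma, ground_subst sigma -> in_S (subst_atom sigma (Pqs (num n) cs us ds))) ->
  nqueens_conclusion cs n.
Proof.
  intros Hn [es [Hlen ->]] Hspec.
  pose proof (Hspec nil_subst nil_subst_ground) as Hground; simpl in Hground.
  rewrite subst_num, subst_lst in Hground.
  destruct (in_S_pqs_positive _ _ _ _ Hn Hground) as [ds' [Hmem Hcorrect]].
  destruct (numerals_enumeration n (map (subst nil_subst) es)) as [Hnd Hnum].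
  { now rewrite length_map. }
  { intros j Hj; apply member_lst, Hmem, Hj. }
  assert (Hfix : map (subst nil_subst) es = es).
  { apply nil_subst_numerals; intros e He; destruct (Hnum e He) as [j [_ ->]]; eauto. }
  rewrite Hfix in Hnd, Hnum, Hmem, Hcorrect.
  pose proof (distinct_list_of_NoDup _ Hnd) as Hdist.
  split; [exact Hdist | split].
  - intros e; rewrite member_lst; split; [apply Hnum|].
    intros [j [Hj ->]]; apply member_lst, Hmem, Hj.
  - eapply solution_of_correct, Hcorrect, Hdist.
Qed.

Lemma separation_extend cs i P (f : nat -> nat -> Z) :
  distinct_list cs -> kth_member P (num (S i)) cs ->
  (forall j j' k k', 1 <= j <= i -> 1 <= j' <= i -> j <> j' ->
     kth_member k (num j) cs -> kth_member k' (num j') cs -> f k j <> f k' j') ->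
  (forall j k, 1 <= j <= i -> kth_member k (num j) cs -> f k j <> f P (S i)) ->
  forall j j' k k', 1 <= j <= S i -> 1 <= j' <= S i -> j <> j' ->
    kth_member k (num j) cs -> kth_member k' (num j') cs -> f k j <> f k' j'.
Proof.
  intros Hdist HP Hold Hnew j j' k k' Hj Hj' Hne Hk Hk'.
  destruct (Nat.eq_dec j (S i)) as [->|Hji].
  - rewrite (distinct_position _ _ _ _ Hdist Hk HP).
    intros E; apply (Hnew j' k'); [lia|exact Hk'|congruence].
  - destruct (Nat.eq_dec j' (S i)) as [->|Hji'].
    + rewrite (distinct_position _ _ _ _ Hdist Hk' HP). apply Hnew; [lia|exact Hk].
    + apply Hold; auto; lia.
Qed.

Lemma up_diag_self P j : Z.to_nat (up_diag P j j) = P.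
Proof. unfold up_diag; lia. Qed.

Lemma down_diag_self P j : Z.to_nat (down_diag P j j) = P.
Proof. unfold down_diag; lia. Qed.

Section AddQueen.

(** The invariant for rows 1..i w.r.t. i, with the up-diagonals in [y :: us]
    and the down-diagonals in [ds], and the queen of row i+1 at position P of
    [cs], [us] and [t :: ds], as provided by the body of clause C2. *)
Variables (i P : nat) (cs y us t ds : term).
Hypothesis distinct_cs : distinct_list cs.
Hypothesis old_correct : correct_up_to cs (Cons y us) ds i i.
Hypothesis new_col : kth_member P (num (S i)) cs.
Hypothesis new_up : kth_member P (num (S i)) us.
Hypothesis new_down : kth_member P (num (S i)) (Cons t ds).

(** W.r.t. row i+1, an old queen's up-diagonal moves one step along [us]. *)
Lemma old_up_position j k :
  1 <= j <= i -> kth_member k (num j) cs -> (0 < up_diag k j (S i))%Z ->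
  kth_member (Z.to_nat (up_diag k j (S i))) (num j) us.
Proof.
  intros Hj Hk Hpos; destruct old_correct as [_ [_ [_ [_ [_ [Hup _]]]]]].
  assert (Hpos' : (0 < up_diag k j i)%Z) by (unfold up_diag in *; lia).
  specialize (Hup j k Hj Hk Hpos').
  replace (Z.to_nat (up_diag k j i)) with (S (Z.to_nat (up_diag k j (S i)))) in Hup
    by (unfold up_diag in *; lia).
  rewrite kth_member_cons in Hup by lia; exact Hup.
Qed.

(** W.r.t. row i+1, an old queen's down-diagonal number grows by one,
    matching the extra cell [t] in front of [ds]; old queens always have a
    positive down-diagonal number. *)
Lemma old_down_position j k :
  1 <= j <= i -> kth_member k (num j) cs ->
  kth_member (Z.to_nat (down_diag k j (S i))) (num j) (Cons t ds).
Proof.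
  intros Hj Hk; destruct old_correct as [_ [_ [_ [_ [_ [_ Hdown]]]]]].
  pose proof (kth_member_pos _ _ _ Hk).
  assert (Hpos : (0 < down_diag k j i)%Z) by (unfold down_diag; lia).
  specialize (Hdown j k Hj Hk Hpos).
  replace (Z.to_nat (down_diag k j (S i))) with (S (Z.to_nat (down_diag k j i)))
    by (unfold down_diag in *; lia).
  rewrite kth_member_cons by lia; exact Hdown.
Qed.

(** An old queen sharing the new queen's up-diagonal would be the P-th
    member of [us], which is the new queen. *)
Lemma old_new_up j k :
  1 <= j <= i -> kth_member k (num j) cs ->
  up_diag k j (S i) <> up_diag P (S i) (S i).
Proof.
  intros Hj Hk E; pose proof (kth_member_pos _ _ _ new_col).
  assert (Hpos : (0 < up_diag k j (S i))%Z) by (rewrite E; unfold up_diag; lia).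
  pose proof (old_up_position j k Hj Hk Hpos) as Hu.
  rewrite E, up_diag_self in Hu.
  pose proof (num_inj _ _ (kth_member_fun _ _ _ _ Hu new_up)); lia.
Qed.

Lemma old_new_down j k :
  1 <= j <= i -> kth_member k (num j) cs ->
  down_diag k j (S i) <> down_diag P (S i) (S i).
Proof.
  intros Hj Hk E; pose proof (old_down_position j k Hj Hk) as Hd.
  rewrite E, down_diag_self in Hd.
  pose proof (num_inj _ _ (kth_member_fun _ _ _ _ Hd new_down)); lia.
Qed.

Lemma correct_up_to_succ : correct_up_to cs us (Cons t ds) (S i) (S i).
Proof.
  destruct old_correct as [_ [_ [Hmem [Hup [Hdown _]]]]].
  split; [lia|]. split; [exact distinct_cs|]. split; [|split; [|split; [|split]]].
  - intros j Hj; destruct (Nat.eq_dec j (S i)) as [->|]; [now exists P|].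
    apply Hmem; lia.
  - apply (separation_extend cs i P (fun k j => up_diag k j (S i))); auto.
    + intros j j' k k' Hj Hj' Hne Hk Hk'.
      specialize (Hup j j' k k' Hj Hj' Hne Hk Hk'); unfold up_diag in *; lia.
    + exact old_new_up.
  - apply (separation_extend cs i P (fun k j => down_diag k j (S i))); auto.
    + intros j j' k k' Hj Hj' Hne Hk Hk'.
      specialize (Hdown j j' k k' Hj Hj' Hne Hk Hk'); unfold down_diag in *; lia.
    + exact old_new_down.
  - intros j k Hj Hk Hpos; destruct (Nat.eq_dec j (S i)) as [->|].
    + rewrite (distinct_position _ _ _ _ distinct_cs Hk new_col), up_diag_self.
      exact new_up.
    + apply old_up_position; auto; lia.
  - intros j k Hj Hk _; destruct (Nat.eq_dec j (S i)) as [->|].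
    + rewrite (distinct_position _ _ _ _ distinct_cs Hk new_col), down_diag_self.
      exact new_down.
    + apply old_down_position; auto; lia.
Qed.

End AddQueen.

Lemma pqs_invariant_succ i P cs y us t ds :
  pqs_invariant i cs (Cons y us) ds ->
  kth_member P (num (S i)) cs -> kth_member P (num (S i)) us ->
  kth_member P (num (S i)) (Cons t ds) ->
  pqs_invariant (S i) cs us (Cons t ds).
Proof.
  intros [Hmem Hcorrect] Hc Hu Hd; split.
  - intros j Hj; destruct (Nat.eq_dec j (S i)) as [->|]; [now exists P|].
    apply Hmem; lia.
  - intros Hdist; apply (correct_up_to_succ i P cs y); auto.
Qed.

Lemma clause_C2_sound a cs us y x ds :
  ground_atom (Pqs (Succ a) cs us (Cons x ds)) ->
  in_S (Pqs a cs (Cons y us) ds) -> in_S (Pq (Succ a) cs us ds) ->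
  in_S (Pqs (Succ a) cs us (Cons x ds)).
Proof.
  intros Hg Hpqs [[_ [k [Hc [Hu Hd]]]] | [_ []]].
  destruct (kth_member_cell _ _ _ Hd) as [t [ds' ->]].
  destruct (in_S_pqs_invariant _ _ _ _ _ Hpqs) as [i [-> Hinv]].
  right; split; [exact Hg|]. right.
  exists (S i), x, (Cons t ds'); do 3 (split; [reflexivity || lia|]).
  exact (pqs_invariant_succ i (S k) cs y us t ds' Hinv Hc Hu Hd).
Qed.

Lemma in_S_model : herbrand_model NQUEENS in_S.
Proof.
  intros c sigma Hin Hs Hbody.
  simpl in Hin; destruct Hin as [<-|[<-|[<-|[<-|[]]]]]; simpl in *.
  - right; split; [repeat split; apply Hs | now left].
  - apply clause_C2_sound with (y := sigma 8).
    + repeat split; apply Hs.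
    + exact (Hbody _ (or_introl eq_refl)).
    + exact (Hbody _ (or_intror (or_introl eq_refl))).
  - left; split; [repeat split; apply Hs|].
    exists 0; split; [|split]; apply kth_member_head.
  - destruct (Hbody _ (or_introl eq_refl)) as [[_ [k [Hc [Hu Hd]]]] | [_ []]].
    left; split; [repeat split; apply Hs|].
    exists (S k); split; [|split]; rewrite kth_member_cons by lia; assumption.
Qed.

Lemma instance_list_of_length sigma vs :
  is_list_of_length (subst sigma (lst (map Var vs) Nil)) (length vs).
Proof.
  rewrite subst_lst; exists (map (subst sigma) (map Var vs)).
  now rewrite !length_map.
Qed.

Theorem mainTheorem3 :
  (forall (n : nat) (cs' us' ds' : term),
     0 < n ->
     is_list_of_length cs' n ->
     (forall sigma, ground_subst sigma ->
        in_S (subst_atom sigma (Pqs (num n) cs' us' ds'))) ->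
     nqueens_conclusion cs' n)
  /\
  (forall (n : nat) (vs : list nat) (x y : nat),
     0 < n -> length vs = n -> NoDup vs ->
     x <> y -> ~ In x vs -> ~ In y vs ->
     forall cs' us' ds',
       answer NQUEENS (Pqs (num n) cs' us' ds') ->
       instance_of (Pqs (num n) cs' us' ds')
                   (Pqs (num n) (lst (map Var vs) Nil) (Var x) (Var y)) ->
       nqueens_conclusion cs' n).
Proof.
  split; [exact spec_forces_solution|].
  intros n vs x y Hn <- _ _ _ _ cs us ds Hans [tau Htau].
  injection Htau as _ Hcs _ _.
  apply (spec_forces_solution _ cs us ds Hn).
  - rewrite Hcs; apply instance_list_of_length.
  - intros sigma Hs; exact (Hans in_S in_S_model sigma Hs).
Qed.
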